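(* For every graph $G=(V,E)$, the star inequalities $$x(W)+(|W|-1)x_w\le |W|\qquad\text{for all } w\in V \text{ and } W\subseteq N(w)$$ are valid for $\mathcal{P}(G)$. Moreover, if $G$ is a tree, each of these inequalities defines a facet of $\mathcal{P}(G)$.
   Context: All graphs are simple and connected; a tree is a connected graph with no cycle. $N(w)$ is the neighborhood of $w$, $x(A)=\sum_{a\in A}x_a$. A co-2-plex is a vertex set inducing a subgraph of maximum degree at most 1. $\mathcal{P}(G)=\mathrm{conv}\{\chi^S : S\text{ co-2-plex of } G\}\subseteq\mathbb{R}^V$. *)

From mathcomp Require Import all_boot all_order all_algebra.
Set Implicit Arguments. Unset Strict Implicit. Unset Printing Implicit Defensive.
Import Order.TTheory GRing.Theory Num.Theory.
Local Open Scope ring_scope.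

Definition simple_graph (T : finType) (e : rel T) : Prop :=
  symmetric e /\ irreflexive e.

Definition connected_graph (T : finType) (e : rel T) : Prop :=
  forall x y : T, connect e x y.

Definition acyclic_graph (T : finType) (e : rel T) : Prop :=
  ~ (exists s : seq T, (3 <= size s)%N /\ ucycle e s).

Definition tree (T : finType) (e : rel T) : Prop :=
  connected_graph e /\ acyclic_graph e.

Definition nbhd (T : finType) (e : rel T) (w : T) : {set T} := [set v | e w v].

Definition co2plex (T : finType) (e : rel T) (S : {set T}) : Prop :=
  forall v, v \in S -> (#|[set u in S | e v u]| <= 1)%N.

Definition chi (R : nzRingType) (T : finType) (S : {set T}) : T -> R :=
  fun v => (v \in S)%:R.

Definition conv_hull (R : realFieldType) (T : finType) (X : (T -> R) -> Prop)
  : (T -> R) -> Prop :=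
  fun x => exists (k : nat) (p : 'I_k -> T -> R) (lam : 'I_k -> R),
    (forall i, X (p i)) /\ (forall i, 0 <= lam i) /\ \sum_i lam i = 1 /\
    (forall t, x t = \sum_i lam i * p i t).

Definition co2plex_polytope (R : realFieldType) (T : finType) (e : rel T)
  : (T -> R) -> Prop :=
  conv_hull (fun y => exists S : {set T}, co2plex e S /\ y = chi R S).

Definition aff_indep (R : realFieldType) (T : finType) (k : nat)
  (p : 'I_k -> T -> R) : Prop :=
  forall c : 'I_k -> R, \sum_i c i = 0 -> (forall t, \sum_i c i * p i t = 0) ->
    forall i, c i = 0.

Definition aff_dim (R : realFieldType) (T : finType) (X : (T -> R) -> Prop)
  (d : nat) : Prop :=
  (exists p : 'I_d.+1 -> T -> R, (forall i, X (p i)) /\ aff_indep p) /\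
  (forall (k : nat) (p : 'I_k.+1 -> T -> R),
     (forall i, X (p i)) -> aff_indep p -> (k <= d)%N).

Definition valid_ineq (R : realFieldType) (T : finType) (P : (T -> R) -> Prop)
  (a : T -> R) (b : R) : Prop :=
  forall x, P x -> \sum_t a t * x t <= b.

Definition defines_facet (R : realFieldType) (T : finType)
  (P : (T -> R) -> Prop) (a : T -> R) (b : R) : Prop :=
  valid_ineq P a b /\
  exists d : nat, aff_dim P d.+1 /\
    aff_dim (fun x => P x /\ \sum_t a t * x t = b) d.

(* coefficient vector of the star inequality x(W) + (|W|-1) x_w <= |W| *)
Definition star_coef (R : nzRingType) (T : finType) (w : T) (W : {set T})
  : T -> R :=
  fun v => (v \in W)%:R + (if v == w then #|W|%:R - 1 else 0).

Arguments co2plex_polytope R {T} e.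
Arguments star_coef R {T} w W.
Arguments chi R {T} S.

(* A co-2-plex containing [w] meets [N(w)] in at most one vertex, so it satisfies
   [x(W) + (|W|-1) x_w <= |W|]; one avoiding [w] does so trivially, and convexity
   gives validity. The polytope is full-dimensional (it contains [0] and all unit
   vectors). In a tree, [N(w)] is stable (no triangle) and two vertices other than
   [w] share at most one neighbour in [N(w)] (no 4-cycle), so [W], [{w, v}] for
   [v] in [W], and [v |: W] for the remaining vertices [v] are tight co-2-plexes;
   their [|V|] incidence vectors are affinely independent, and the face cannot
   have larger dimension since the inequality has a non-zero coefficient. *)

From mathcomp Require Import all_boot all_order all_algebra zify.
Set Implicit Arguments. Unset Strict Implicit. Unset Printing Implicit Defensive.
Import Order.TTheory GRing.Theory Num.Theory.
Local Open Scope ring_scope.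

Lemma sumr_mem_card (R : nzRingType) (T : finType) (X : {set T}) :
  \sum_t ((t \in X)%:R : R) = #|X|%:R.
Proof.
rewrite -natr_sum; congr (_%:R).
by rewrite -sum1_card [RHS]big_mkcond /=; apply: eq_bigr => t _; case: (t \in X).
Qed.

Lemma sumr_eq_mul (R : nzRingType) (T : finType) (a : T) (f : T -> R) :
  \sum_v ((v == a)%:R * f v) = f a.
Proof.
rewrite (bigD1 a) //= eqxx mul1r big1 ?addr0 // => v /negbTE ->.
by rewrite mul0r.
Qed.

Lemma sumr_option (R : nzRingType) (T : finType) (F : option T -> R) :
  \sum_o F o = F None + \sum_v F (Some v).
Proof.
rewrite (bigD1 None) //=; congr (_ + _).
rewrite (reindex_omap Some (fun o => o)) /=; last by case.
by apply: eq_bigl => v; rewrite eqxx.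
Qed.

Lemma sumr_enum_val (R : nzRingType) (U : finType) (F : U -> R) :
  \sum_u F u = \sum_(i < #|U|) F (enum_val i).
Proof. by rewrite -big_enum_val; apply: eq_bigl. Qed.

Section AffineIndependence.
Variables (R : realFieldType) (T : finType).

(* The vectors [(1, p i restricted to A)] are linearly independent in a space of dimension [#|A|.+1]. *)
Lemma aff_indep_on_card_le (m : nat) (p : 'I_m -> T -> R) (A : {set T}) :
  (forall c : 'I_m -> R, \sum_i c i = 0 ->
     (forall t, t \in A -> \sum_i c i * p i t = 0) -> forall i, c i = 0) ->
  (m <= #|A|.+1)%N.
Proof.
move=> indep.
pose M : 'M[R]_(m, #|A|.+1) :=
  \matrix_(i, j) (if unlift ord0 j is Some j' then p i (enum_val j') else 1).
suff /eqP <- : row_free M by exact: rank_leq_col.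
rewrite -kermx_eq0; apply/eqP/row_matrixP => k; rewrite row0.
set u := row k (kermx M).
have uM : u *m M = 0 by apply/sub_kermxP; rewrite row_sub.
have uM_col j : \sum_i u 0 i * M i j = 0.
  by have := congr1 (fun X : 'M_(1, _) => X 0 j) uM; rewrite !mxE.
apply/rowP => i; rewrite [RHS]mxE; apply: (indep (fun i => u 0 i)) => [|t tA].
  by rewrite -[RHS](uM_col ord0); apply: eq_bigr => j _; rewrite [M _ _]mxE unlift_none mulr1.
rewrite -[RHS](uM_col (lift ord0 (enum_rank_in tA t))).
by apply: eq_bigr => j _; rewrite [M _ _]mxE liftK enum_rankK_in.
Qed.

Lemma aff_indep_card_le (m : nat) (p : 'I_m -> T -> R) :
  aff_indep p -> (m <= #|T|.+1)%N.
Proof.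
move=> indep; rewrite -cardsT; apply: aff_indep_on_card_le => c c0 ct.
by apply: indep => // t; apply: ct; rewrite inE.
Qed.

(* On the hyperplane [a x = b] with [a t0 != 0] the coordinate [t0] is an affine function of the others. *)
Lemma aff_indep_hyperplane_card_le (m : nat) (p : 'I_m -> T -> R) (a : T -> R) (b : R) (t0 : T) :
  a t0 != 0 -> (forall i, \sum_t a t * p i t = b) -> aff_indep p -> (m <= #|T|)%N.
Proof.
move=> a0 on_hyp indep.
have := @aff_indep_on_card_le m p [set~ t0].
rewrite cardsC1 prednK; last by apply/card_gt0P; exists t0.
apply=> c c0 ct; apply: indep => // t.
have [->|ntt0] := eqVneq t t0; last by apply: ct; rewrite !inE.
have E : \sum_t a t * (\sum_i c i * p i t) = 0.
  under eq_bigr do rewrite mulr_sumr; rewrite exchange_big /=.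
  under eq_bigr do under eq_bigr do rewrite mulrCA.
  by under eq_bigr do rewrite -mulr_sumr on_hyp; rewrite -mulr_suml c0 mul0r.
rewrite (bigD1 t0) //= [X in _ + X]big1 ?addr0 in E => [|s ns0]; last by rewrite ct ?mulr0 // !inE.
by move/eqP: E; rewrite mulf_eq0 (negbTE a0) => /eqP.
Qed.

Definition aff_indep_fam (U : finType) (q : U -> T -> R) : Prop :=
  forall c : U -> R, \sum_u c u = 0 -> (forall t, \sum_u c u * q u t = 0) -> forall u, c u = 0.

Lemma aff_dim_fam (X : (T -> R) -> Prop) (U : finType) (q : U -> T -> R) (d : nat) :
  #|U| = d.+1 -> (forall u, X (q u)) -> aff_indep_fam q ->
  (forall k (p : 'I_k.+1 -> T -> R), (forall i, X (p i)) -> aff_indep p -> (k <= d)%N) ->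
  aff_dim X d.
Proof.
move=> cardU Xq indep bound; split=> //; move: (d.+1) cardU => n <-.
exists (fun i => q (enum_val i)); split=> [i|c c0 ct i]; first exact: Xq.
rewrite -(enum_valK i); apply: (indep (fun u => c (enum_rank u))).
  by rewrite sumr_enum_val; under eq_bigr do rewrite enum_valK.
by move=> t; rewrite sumr_enum_val -[RHS](ct t); under eq_bigr do rewrite enum_valK.
Qed.

End AffineIndependence.

Lemma conv_hull_valid (R : realFieldType) (T : finType) (X : (T -> R) -> Prop)
    (a : T -> R) (b : R) :
  (forall y, X y -> \sum_t a t * y t <= b) -> valid_ineq (conv_hull X) a b.
Proof.
move=> Xb x [k [p [lam [Xp [lam_ge0 [lam_sum xE]]]]]].
under eq_bigr do rewrite xE mulr_sumr; rewrite exchange_big /=.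
apply: le_trans (_ : \sum_i lam i * b <= _); last by rewrite -mulr_suml lam_sum mul1r.
apply: ler_sum => i _; under eq_bigr do rewrite mulrCA.
by rewrite -mulr_sumr ler_wpM2l ?Xb.
Qed.

Lemma co2plex_card_le2 (T : finType) (e : rel T) (S : {set T}) :
  irreflexive e -> (#|S| <= 2)%N -> co2plex e S.
Proof.
move=> e_irr S_le2 v vS.
have sub : [set u in S | e v u] \subset S :\ v.
  apply/subsetP => u; rewrite !inE => /andP [uS evu]; rewrite uS andbT.
  by apply: contraTneq evu => ->; rewrite e_irr.
by apply: leq_trans (subset_leq_card sub) _; move: S_le2; rewrite (cardsD1 v S) vS; lia.
Qed.

Lemma chi_co2plex_polytope (R : realFieldType) (T : finType) (e : rel T) (S : {set T}) :
  co2plex e S -> co2plex_polytope R e (chi R S).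
Proof.
move=> S_co2; exists 1%N, (fun _ => chi R S), (fun _ => 1).
split; first by move=> i; exists S.
by rewrite big_ord1; split=> [i|]; [exact: ler01|split=> // t; rewrite big_ord1 mul1r].
Qed.

Lemma star_coef_chi (R : comNzRingType) (T : finType) (w : T) (W S : {set T}) :
  \sum_t star_coef R w W t * chi R S t = #|W :&: S|%:R + (w \in S)%:R * (#|W|%:R - 1).
Proof.
rewrite /star_coef /chi; under eq_bigr do rewrite mulrDl.
rewrite big_split /=; congr (_ + _).
  by rewrite -sumr_mem_card; apply: eq_bigr => t _; rewrite inE -natrM mulnb.
rewrite (bigD1 w) //= eqxx big1 => [|t /negbTE ->]; last by rewrite mul0r.
by rewrite addr0 mulrC.
Qed.

Lemma star_ineq_co2plex (R : numDomainType) (T : finType) (e : rel T) (w : T) (W S : {set T}) :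
  W \subset nbhd e w -> co2plex e S ->
  \sum_t star_coef R w W t * chi R S t <= #|W|%:R.
Proof.
move=> sW S_co2; rewrite star_coef_chi; case wS: (w \in S); last first.
  by rewrite mul0r addr0 ler_nat subset_leq_card // subsetIl.
have : (#|W :&: S| <= 1)%N.
  apply: leq_trans (S_co2 w wS); apply: subset_leq_card; apply/subsetP => u.
  by rewrite !inE => /andP [/(subsetP sW) + ->]; rewrite inE.
by rewrite -(ler_nat R) mul1r addrCA gerDl subr_le0.
Qed.

Lemma star_ineq_valid (R : realFieldType) (T : finType) (e : rel T) (w : T) (W : {set T}) :
  W \subset nbhd e w -> valid_ineq (co2plex_polytope R e) (star_coef R w W) #|W|%:R.
Proof.
move=> sW; apply: conv_hull_valid => _ [S [S_co2 ->]].
exact (star_ineq_co2plex R sW S_co2).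
Qed.

Lemma co2plex_polytope_dim (R : realFieldType) (T : finType) (e : rel T) :
  irreflexive e -> aff_dim (co2plex_polytope R e) #|T|.
Proof.
move=> e_irr.
pose q (o : option T) := chi R (if o is Some v then [set v] else set0).
apply: (@aff_dim_fam _ _ _ _ q); first exact: card_option.
- case=> [v|]; apply/chi_co2plex_polytope/co2plex_card_le2; by rewrite ?cards1 ?cards0.
- move=> c c0 ct.
  have c_Some t : c (Some t) = 0.
    rewrite -(ct t) sumr_option /q /chi /= inE mulr0 add0r -[LHS](sumr_eq_mul t (fun v => c (Some v))).
    by apply: eq_bigr => v _; rewrite inE eq_sym mulrC.
  case=> [t|]; first exact: c_Some.
  by move: c0; rewrite sumr_option big1 ?addr0 // => v _; exact: c_Some.
- by move=> k p _ /aff_indep_card_le.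
Qed.

Definition stable (T : finType) (e : rel T) (A : {set T}) : Prop :=
  {in A &, forall x y, ~~ e x y}.

Lemma co2plex_stable (T : finType) (e : rel T) (A : {set T}) :
  stable e A -> co2plex e A.
Proof.
move=> A_stable x xA; rewrite (_ : [set u in A | e x u] = set0) ?cards0 //.
by apply/setP => u; rewrite !inE; case uA: (u \in A) => //=; apply/negbTE/A_stable.
Qed.

Lemma co2plex_setU1 (T : finType) (e : rel T) (A : {set T}) (v : T) :
  irreflexive e -> stable e A -> (#|[set u in A | e v u]| <= 1)%N -> co2plex e (v |: A).
Proof.
move=> e_irr A_stable v_nbrs x /setU1P [->|xA].
  apply: leq_trans (subset_leq_card _) v_nbrs; apply/subsetP => u; rewrite !inE.
  by case/andP=> /predU1P [->|uA] evu; [rewrite e_irr in evu | rewrite uA evu].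
rewrite -(cards1 v) subset_leq_card //; apply/subsetP => u.
rewrite !inE => /andP [/predU1P [-> _|uA]]; first exact: eqxx.
by rewrite (negbTE (A_stable x u xA uA)).
Qed.

Section AcyclicGraph.
Variables (T : finType) (e : rel T).
Hypotheses (e_simple : simple_graph e) (e_acyclic : acyclic_graph e).

Lemma edge_neq (x y : T) : e x y -> x != y.
Proof. by apply: contraTneq => ->; rewrite e_simple.2. Qed.

Lemma acyclic_no_triangle (w u1 u2 : T) : e w u1 -> e w u2 -> ~~ e u1 u2.
Proof.
move=> e1 e2; apply/negP => e12; apply: e_acyclic; exists [:: w; u1; u2]; split=> //.
rewrite /ucycle /= e1 e12 (e_simple.1 u2) e2 !inE negb_or.
by rewrite (edge_neq e1) (edge_neq e2) (edge_neq e12).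
Qed.

Lemma acyclic_common_nbr (w v u1 u2 : T) :
  v != w -> e w u1 -> e w u2 -> e v u1 -> e v u2 -> u1 = u2.
Proof.
move=> nvw ew1 ew2 ev1 ev2; apply/eqP/negPn/negP => n12; apply: e_acyclic.
exists [:: w; u1; v; u2]; split=> //.
rewrite /ucycle /= ew1 (e_simple.1 u1) ev1 ev2 (e_simple.1 u2) ew2 !inE !negb_or.
by rewrite n12 (eq_sym w v) nvw (eq_sym u1 v) !(edge_neq ew1, edge_neq ew2, edge_neq ev1, edge_neq ev2).
Qed.

Lemma stable_nbhd (w : T) : stable e (nbhd e w).
Proof. by move=> x y; rewrite !inE; exact: acyclic_no_triangle. Qed.

End AcyclicGraph.

Section StarFacet.
Variables (R : realFieldType) (T : finType) (e : rel T).
Hypotheses (e_simple : simple_graph e) (e_acyclic : acyclic_graph e).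
Variables (w : T) (W : {set T}).
Hypothesis W_nbhd : W \subset nbhd e w.

Lemma notin_nbhd_center : w \notin W.
Proof. by apply/negP => /(subsetP W_nbhd); rewrite inE e_simple.2. Qed.

Lemma nbhd_center (u : T) : u \in W -> e w u.
Proof. by move/(subsetP W_nbhd); rewrite inE. Qed.

Lemma stable_star : stable e W.
Proof. by move=> x y /(subsetP W_nbhd) xN /(subsetP W_nbhd); exact: stable_nbhd. Qed.

Definition star_face_set (v : T) : {set T} :=
  if v == w then W else if v \in W then [set w; v] else v |: W.

Variant star_face_set_spec (v : T) : {set T} -> Type :=
  | StarFaceCenter of v = w : star_face_set_spec v W
  | StarFaceLeaf of v \in W : star_face_set_spec v [set w; v]
  | StarFaceOut of v != w & v \notin W : star_face_set_spec v (v |: W).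

Lemma star_face_setP (v : T) : star_face_set_spec v (star_face_set v).
Proof.
rewrite /star_face_set; have [->|nvw] := eqVneq v w; first exact: StarFaceCenter.
by case: ifPn => [vW|vNW]; [exact: StarFaceLeaf | exact: StarFaceOut].
Qed.

Lemma star_face_set_center : star_face_set w = W.
Proof. by rewrite /star_face_set eqxx. Qed.

Lemma star_face_set_leaf (v : T) : v \in W -> star_face_set v = [set w; v].
Proof.
move=> vW; rewrite /star_face_set vW ifN //.
by apply: contraNneq notin_nbhd_center => <-.
Qed.

Lemma mem_star_face_set_out (t v : T) :
  t != w -> t \notin W -> (t \in star_face_set v) = (v == t).
Proof.
move=> ntw ntW; case: star_face_setP => [->|_|_ _].
- by rewrite eq_sym (negbTE ntW) (negbTE ntw).
- by rewrite !inE (negbTE ntw) eq_sym.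
- by rewrite !inE (negbTE ntW) orbF eq_sym.
Qed.

Lemma co2plex_star_face_set (v : T) : co2plex e (star_face_set v).
Proof.
case: star_face_setP => [_ | _ | nvw _]; first exact/co2plex_stable/stable_star.
  by apply: co2plex_card_le2 e_simple.2 _; rewrite cards2; case: (w != v).
apply: co2plex_setU1 e_simple.2 stable_star _; apply/card_le1_eqP => u2 u1.
rewrite !inE => /andP [u2W ev2] /andP [u1W ev1].
exact (acyclic_common_nbr e_simple e_acyclic nvw (nbhd_center u1W) (nbhd_center u2W) ev1 ev2).
Qed.

Lemma star_face_set_tight (v : T) :
  \sum_t star_coef R w W t * chi R (star_face_set v) t = #|W|%:R.
Proof.
rewrite star_coef_chi; case: star_face_setP => [_ | vW | nvw vNW].
- by rewrite setIid (negbTE notin_nbhd_center) mul0r addr0.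
- rewrite (_ : W :&: [set w; v] = [set v]); first by rewrite cards1 set21 mul1r addrC subrK.
  apply/setP => t; rewrite !inE; have [->|ntv] := eqVneq t v; first by rewrite vW orbT.
  rewrite orbF; apply/negbTE/andP => -[tW /eqP tw].
  by move: notin_nbhd_center; rewrite -tw tW.
- rewrite (setIidPl (subsetUr _ _)) !inE (negbTE notin_nbhd_center) orbF.
  by rewrite eq_sym (negbTE nvw) mul0r addr0.
Qed.

Lemma star_face_aff_indep : aff_indep_fam (fun v => chi R (star_face_set v)).
Proof.
move=> c c0 ct.
have c_out t : t != w -> t \notin W -> c t = 0.
  move=> ntw ntW; rewrite -(ct t) -[LHS](sumr_eq_mul t c).
  by apply: eq_bigr => v _; rewrite /chi mem_star_face_set_out // mulrC.
have supported (F : T -> R) : (forall v, c v = 0 -> F v = 0) ->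
    \sum_v F v = F w + \sum_(v in W) F v.
  move=> F0; rewrite (bigD1 w) //=; congr (_ + _).
  rewrite big_mkcond [RHS]big_mkcond; apply: eq_bigr => v _.
  have [->|nvw] := eqVneq v w; first by rewrite (negbTE notin_nbhd_center).
  by case: ifPn => // vNW; rewrite F0 // c_out.
have supported_chi t : \sum_v c v * chi R (star_face_set v) t =
    c w * chi R W t + \sum_(v in W) c v * chi R [set w; v] t.
  rewrite supported => [|v ->]; last exact: mul0r.
  by rewrite star_face_set_center; congr (_ + _); apply: eq_bigr => v /star_face_set_leaf ->.
have cw : c w = 0.
  have sumW : \sum_(v in W) c v = 0.
    rewrite -[RHS](ct w) supported_chi /chi (negbTE notin_nbhd_center) mulr0 add0r.
    by apply: eq_bigr => v _; rewrite set21 mulr1.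
  by move: c0; rewrite supported // sumW addr0.
have cW u : u \in W -> c u = 0.
  move=> uW; have := ct u; rewrite supported_chi /chi uW cw mul0r add0r.
  rewrite (bigD1 u) //= !inE eqxx orbT mulr1 big1 ?addr0 // => v /andP [_ nvu].
  rewrite !inE (eq_sym u v) (negbTE nvu) orbF.
  by case: eqP => [uw|]; [move: notin_nbhd_center; rewrite -uw uW | rewrite mulr0].
move=> v; have [->|nvw] := eqVneq v w; first exact: cw.
by have [/cW|] := boolP (v \in W); last exact: c_out.
Qed.

Lemma star_coef_neq0 : exists t, star_coef R w W t != 0.
Proof.
have [W0|[u uW]] := set_0Vmem W.
  by exists w; rewrite /star_coef eqxx W0 inE cards0 add0r sub0r oppr_eq0 oner_eq0.
exists u; rewrite /star_coef uW ifN ?addr0 ?oner_eq0 //.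
by apply: contraNneq notin_nbhd_center => <-.
Qed.

Lemma star_face_dim :
  aff_dim (fun x => co2plex_polytope R e x /\ \sum_t star_coef R w W t * x t = #|W|%:R)
    #|T|.-1.
Proof.
apply: (aff_dim_fam (q := fun v => chi R (star_face_set v))) star_face_aff_indep _.
- by rewrite prednK //; apply/card_gt0P; exists w.
- by move=> v; split; [exact/chi_co2plex_polytope/co2plex_star_face_set | exact: star_face_set_tight].
- move=> k p face_p /aff_indep_hyperplane_card_le; have [t0 a0] := star_coef_neq0.
  by move=> /(_ _ _ t0 a0 (fun i => (face_p i).2)); lia.
Qed.

End StarFacet.

Lemma star_ineq_facet (R : realFieldType) (T : finType) (e : rel T) (w : T) (W : {set T}) :
  simple_graph e -> acyclic_graph e -> W \subset nbhd e w ->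
  defines_facet (co2plex_polytope R e) (star_coef R w W) #|W|%:R.
Proof.
move=> e_simple e_acyclic W_nbhd; split; first exact: star_ineq_valid.
have T_gt0 : (0 < #|T|)%N by apply/card_gt0P; exists w.
exists #|T|.-1; rewrite prednK //; split; first exact: co2plex_polytope_dim e_simple.2.
exact: star_face_dim.
Qed.

Theorem mainTheorem7 (R : realFieldType) (T : finType) (e : rel T) :
  simple_graph e -> connected_graph e ->
  (forall (w : T) (W : {set T}), W \subset nbhd e w ->
     valid_ineq (co2plex_polytope R e) (star_coef R w W) #|W|%:R) /\
  (tree e ->
   forall (w : T) (W : {set T}), W \subset nbhd e w ->
     defines_facet (co2plex_polytope R e) (star_coef R w W) #|W|%:R).
Proof.
move=> e_simple _; split=> [w W|[_ e_acyclic] w W]; first exact: star_ineq_valid.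
exact: star_ineq_facet.
Qed.
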